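(* Let $X$ be a space with base point $*$ and $C$ a locally trivial $X$-groupoid with $\Omega_C=C_*^*$. Then $C$ is Hausdorff if and only if $X$ and $\Omega_C$ are Hausdorff.
   Context: $X$-groupoid: a space $C$ with continuous source/target $\alpha,\beta:C\to X$, continuous associative partial composition on $\{(c_1,c_2):\alpha(c_1)=\beta(c_2)\}$ with $\alpha(c_1c_2)=\alpha(c_2)$, $\beta(c_1c_2)=\beta(c_1)$, continuous units $i_x$ and continuous inversion $C_x^y\to C_y^x$, where $C_x=\alpha^{-1}(x)$, $C^y=\beta^{-1}(y)$, $C^y_x=C_x\cap C^y$. A $C$-contraction is a continuous $\rho:U_\rho\to C^*$, $U_\rho\subset X$ open, with $\alpha(\rho(x))=x$; $C$ is locally trivial if the $U_\rho$ cover $X$. *)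

From HB Require Import structures.
From mathcomp Require Import all_boot all_order all_algebra.
From mathcomp Require Import all_classical all_reals all_analysis.
Set Implicit Arguments. Unset Strict Implicit. Unset Printing Implicit Defensive.
Local Open Scope classical_set_scope.

(* Source alpha, target beta; composition c1 c2 is defined when
   alpha c1 = beta c2 (mul is a total function whose values outside the
   composable pairs are irrelevant); units i; inversion inv. *)
Record Xgroupoid (X C : topologicalType) := {
  src : C -> X ;
  tgt : C -> X ;
  mul : C -> C -> C ;
  unt : X -> C ;
  inv : C -> C ;
  src_cont : continuous src ;
  tgt_cont : continuous tgt ;
  mul_cont : {within [set p : C * C | src p.1 = tgt p.2],
                continuous (fun p : C * C => mul p.1 p.2)} ;
  src_mul : forall c1 c2, src c1 = tgt c2 -> src (mul c1 c2) = src c2 ;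
  tgt_mul : forall c1 c2, src c1 = tgt c2 -> tgt (mul c1 c2) = tgt c1 ;
  mulA : forall c1 c2 c3, src c1 = tgt c2 -> src c2 = tgt c3 ->
           mul c1 (mul c2 c3) = mul (mul c1 c2) c3 ;
  unt_cont : continuous unt ;
  src_unt : forall x, src (unt x) = x ;
  tgt_unt : forall x, tgt (unt x) = x ;
  mul_unt_r : forall c, mul c (unt (src c)) = c ;
  mul_unt_l : forall c, mul (unt (tgt c)) c = c ;
  inv_cont : continuous inv ;
  src_inv : forall c, src (inv c) = tgt c ;
  tgt_inv : forall c, tgt (inv c) = src c ;
  mul_inv_r : forall c, mul c (inv c) = unt (tgt c) ;
  mul_inv_l : forall c, mul (inv c) c = unt (src c)
}.

Definition fib_src X C (G : Xgroupoid X C) (x : X) : set C := [set c | src G c = x].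
Definition fib_tgt X C (G : Xgroupoid X C) (y : X) : set C := [set c | tgt G c = y].
Definition hom X C (G : Xgroupoid X C) (x y : X) : set C :=
  fib_src G x `&` fib_tgt G y.

Definition vertex_group X C (G : Xgroupoid X C) (star : X) : set C :=
  hom G star star.

Definition contraction X C (G : Xgroupoid X C) (star : X)
    (U : set X) (rho : X -> C) : Prop :=
  open U /\ {within U, continuous rho} /\
  (forall x, U x -> fib_tgt G star (rho x)) /\
  (forall x, U x -> src G (rho x) = x).

Definition locally_trivial X C (G : Xgroupoid X C) (star : X) : Prop :=
  forall x : X, exists (U : set X) (rho : X -> C),
    contraction G star U rho /\ U x.

(* If [c] and [d] cannot be separated, neither can their sources and targets,
   which therefore agree.  Contractions [rho] near the source and [sig] near
   the target give [e |-> sig (tgt e) * e * (rho (src e))^-1], continuous near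
   [c] and [d] with values in the vertex group and injective on arrows with
   fixed ends, so [c = d] once the vertex group is Hausdorff.  Conversely, the
   units embed [X] into [C]. *)

From Pilot Require Import Defs.
From HB Require Import structures.
From mathcomp Require Import all_boot all_order all_algebra.
From mathcomp Require Import all_classical all_reals all_analysis.
(* [mul], [inv] and [mulA] of [Xgroupoid] are shadowed by [FracField]. *)
Import Pilot.Defs.

Set Implicit Arguments.
Unset Strict Implicit.
Unset Printing Implicit Defensive.

Local Open Scope classical_set_scope.

Section ClusterMaps.
Context {S T : topologicalType}.

Lemma cvg_within_near {I : Type} (F : set_system I) {FF : Filter F}
    (f : I -> T) (G : set_system T) (A : set T) :
  f @ F --> G -> (\forall i \near F, A (f i)) -> f @ F --> within A G.
Proof. by move=> fG fA P /fG; apply: filterS2 fA => i Afi; apply. Qed.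

Lemma cvg_subspace {I : Type} (F : set_system I) {FF : Filter F}
    (f : I -> T) (A : set T) (x : T) :
  A x -> f @ F --> x -> (\forall i \near F, A (f i)) ->
  (f : I -> subspace A) @ F --> (x : subspace A).
Proof.
move=> Ax fx fA; apply/(@subspace_cvgP _ A (f @ F) x _ Ax).
exact: cvg_within_near.
Qed.

Lemma cluster_nbhs_map (f : S -> T) (a b : S) :
  f @ nbhs a --> f a -> f @ nbhs b --> f b ->
  cluster (nbhs a) b -> cluster (nbhs (f a)) (f b).
Proof.
move=> fa fb ab A B /fa Aa /fb Bb.
by have [z [Az Bz]] := ab _ _ Aa Bb; exists (f z).
Qed.

Lemma continuous_inj_hausdorff (f : S -> T) :
  continuous f -> injective f -> hausdorff_space T -> hausdorff_space S.
Proof.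
move=> fC fI hT a b ab; apply/fI/hT.
exact: cluster_nbhs_map (fC a) (fC b) ab.
Qed.

End ClusterMaps.

Section Groupoid.
Variables (X C : topologicalType) (G : Xgroupoid X C).

Lemma gmulKg a b : src G a = tgt G b -> mul G (inv G a) (mul G a b) = b.
Proof.
by move=> ab; rewrite (mulA (src_inv G a) ab) mul_inv_l ab mul_unt_l.
Qed.

Lemma gmulgKV a b : src G a = src G b -> mul G (mul G a (inv G b)) b = a.
Proof.
move=> ab; rewrite -(mulA _ (src_inv G b)) ?tgt_inv //.
by rewrite mul_inv_l -ab mul_unt_r.
Qed.

Lemma cvg_gmul {I : Type} (F : set_system I) {FF : Filter F}
    (f g : I -> C) a b :
  src G a = tgt G b -> f @ F --> a -> g @ F --> b ->
  (\forall i \near F, src G (f i) = tgt G (g i)) ->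
  (fun i => mul G (f i) (g i)) @ F --> mul G a b.
Proof.
move=> ab fa gb fg; pose D := [set p : C * C | src G p.1 = tgt G p.2].
have fgD : (fun i => (f i, g i)) @ F --> within D (nbhs (a, b)).
  exact: cvg_within_near (cvg_pair fa gb) fg.
have mulD :
    (fun p : C * C => mul G p.1 p.2) @ within D (nbhs (a, b)) --> mul G a b.
  exact: (proj1 (subspace_continuousP _ _) (@mul_cont _ _ G)).
exact: cvg_comp fgD mulD.
Qed.

End Groupoid.

Lemma contraction_cvg (X C : topologicalType) (G : Xgroupoid X C) (star : X)
    (W : set X) (tau : X -> C) x :
  contraction G star W tau -> W x -> tau @ nbhs x --> tau x.
Proof.
case=> oW [tauC _] Wx.
by move: tauC; rewrite continuous_open_subspace // => /(_ x (mem_set Wx)).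
Qed.

Section Transport.
Variables (X C : topologicalType) (G : Xgroupoid X C) (star : X).
Variables (U V : set X) (rho sig : X -> C).
Hypotheses (rhoC : contraction G star U rho) (sigC : contraction G star V sig).

Let src_rho x : U x -> src G (rho x) = x.
Proof. by case: rhoC => _ [_ [_]]; apply. Qed.
Let tgt_rho x : U x -> tgt G (rho x) = star.
Proof. by case: rhoC => _ [_ [h _]]; exact: h. Qed.
Let src_sig y : V y -> src G (sig y) = y.
Proof. by case: sigC => _ [_ [_]]; apply. Qed.
Let tgt_sig y : V y -> tgt G (sig y) = star.
Proof. by case: sigC => _ [_ [h _]]; exact: h. Qed.

Definition transport e :=
  mul G (mul G (sig (tgt G e)) e) (inv G (rho (src G e))).

Let src_sig_mul e : V (tgt G e) -> src G (mul G (sig (tgt G e)) e) = src G e.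
Proof. by move=> Ve; rewrite src_mul // src_sig. Qed.

Let transport_composable e : U (src G e) -> V (tgt G e) ->
  src G (mul G (sig (tgt G e)) e) = tgt G (inv G (rho (src G e))).
Proof. by move=> Ue Ve; rewrite tgt_inv src_rho // src_sig_mul. Qed.

Lemma transport_vertex e : U (src G e) -> V (tgt G e) ->
  vertex_group G star (transport e).
Proof.
move=> Ue Ve; split; rewrite /fib_src /fib_tgt /transport /=.
  by rewrite src_mul ?transport_composable // src_inv tgt_rho.
by rewrite tgt_mul ?transport_composable // tgt_mul ?src_sig // tgt_sig.
Qed.

Lemma near_transport_dom e : U (src G e) -> V (tgt G e) ->
  \forall z \near e, U (src G z) /\ V (tgt G z).
Proof.
have [[oU _] [oV _]] := (rhoC, sigC).
move=> Ue Ve; apply: filterI.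
  by apply: (@src_cont _ _ G e); apply: open_nbhs_nbhs.
by apply: (@tgt_cont _ _ G e); apply: open_nbhs_nbhs.
Qed.

Lemma cvg_transport e : U (src G e) -> V (tgt G e) ->
  (transport : C -> subspace (vertex_group G star)) @ nbhs e -->
  (transport e : subspace (vertex_group G star)).
Proof.
move=> Ue Ve; have near_dom := near_transport_dom Ue Ve.
apply: (cvg_subspace (transport_vertex Ue Ve)).
  apply: cvg_gmul; first exact: transport_composable.
  - apply: cvg_gmul; [by rewrite src_sig | | exact: cvg_id |].
      exact: continuous_comp (@tgt_cont _ _ G e) (contraction_cvg sigC Ve).
    by apply: filterS near_dom => z [_ /src_sig].
  - apply: continuous_comp (@inv_cont _ _ G _).
    exact: continuous_comp (@src_cont _ _ G e) (contraction_cvg rhoC Ue).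
  - by apply: filterS near_dom => z [Uz Vz]; exact: transport_composable.
by apply: filterS near_dom => z [Uz Vz]; exact: transport_vertex.
Qed.

Lemma transport_inj c d : src G c = src G d -> tgt G c = tgt G d ->
  U (src G c) -> V (tgt G c) -> transport c = transport d -> c = d.
Proof.
move=> cd_src cd_tgt Uc Vc; have Vd : V (tgt G d) by rewrite -cd_tgt.
rewrite /transport -cd_src -cd_tgt => /(congr1 (mul G ^~ (rho (src G c)))).
rewrite gmulgKV; last by rewrite src_sig_mul // src_rho.
rewrite gmulgKV; last by rewrite cd_tgt src_sig_mul // src_rho // cd_src.
move=> /(congr1 (mul G (inv G (sig (tgt G c))))).
by rewrite !gmulKg ?src_sig // -cd_tgt.
Qed.

End Transport.

Theorem mainTheorem20 (X C : topologicalType) (star : X) (G : Xgroupoid X C) :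
  locally_trivial G star ->
  (hausdorff_space C <->
   (hausdorff_space X /\ hausdorff_space (subspace (vertex_group G star)))).
Proof.
move=> trivG; split.
  move=> hC; split; last exact: subspace_hausdorff.
  exact: continuous_inj_hausdorff (@unt_cont _ _ G) (can_inj (src_unt G)) hC.
move=> [hX hO] c d cd.
have cd_src : src G c = src G d.
  exact/hX/(cluster_nbhs_map (@src_cont _ _ G c) (@src_cont _ _ G d) cd).
have cd_tgt : tgt G c = tgt G d.
  exact/hX/(cluster_nbhs_map (@tgt_cont _ _ G c) (@tgt_cont _ _ G d) cd).
have [U [rho [rhoC Uc]]] := trivG (src G c).
have [V [sig [sigC Vc]]] := trivG (tgt G c).
have Ud : U (src G d) by rewrite -cd_src.
have Vd : V (tgt G d) by rewrite -cd_tgt.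
apply: (transport_inj rhoC sigC cd_src cd_tgt Uc Vc); apply: hO.
exact (cluster_nbhs_map (cvg_transport rhoC sigC Uc Vc)
                        (cvg_transport rhoC sigC Ud Vd) cd).
Qed.
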